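(* Let $p\colon E\to B$ be an arc-hedgehog covering. Then $p$ is a disk-hedgehog covering if and only if it is a disk-covering.
   Context: All maps are continuous. A Peano space is a connected, locally path-connected space. For a class $\mathcal{P}$ of spaces, $p\colon E\to B$ is a $\mathcal{P}$-covering if for every $e_0\in E$, $X\in\mathcal{P}$, $x_0\in X$ and map $f\colon X\to B$ with $f(x_0)=p(e_0)$ there is a map $g\colon X\to E$ with $p\circ g=f$, $g(x_0)=e_0$, and such lifts are unique. A disk-covering is a $\mathcal{P}$-covering for $\mathcal{P}=\{D^2\}$ ($D^2$ the closed unit 2-disk). A directed wedge is $(Z,z_0)=\bigvee_{s\in S}(Z_s,z_s)$, a wedge of pointed Peano spaces indexed by a directed set $S$, topologized so that $U\subset Z\setminus\{z_0\}$ is open iff each $U\cap Z_s$ is open, and $U\ni z_0$ is an open neighborhood of $z_0$ iff each $U\cap Z_s$ is open and there is $t\in S$ with $Z_s\subset U$ for all $s>t$. An arc-hedgehog (resp. disk-hedgehog) is a directed wedge with each $(Z_s,z_s)$ homeomorphic to $([0,1],0)$ (resp. each $Z_s$ homeomorphic to $D^2$). An arc-hedgehog (resp. disk-hedgehog) covering is a $\mathcal{P}$-covering for $\mathcal{P}$ the class of all arc-hedgehogs (resp. disk-hedgehogs). *)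

From HB Require Import structures.
From mathcomp Require Import all_boot all_order all_algebra.
From mathcomp Require Import all_classical all_reals.
From mathcomp Require Import topology_structure subtype_topology product_topology num_topology.
From mathcomp Require Import Rstruct Rstruct_topology.
From Stdlib Require Import Rdefinitions.

Set Implicit Arguments.
Unset Strict Implicit.
Unset Printing Implicit Defensive.

Import Order.TTheory GRing.Theory Num.Theory.
Local Open Scope classical_set_scope.
Local Open Scope ring_scope.

Record directedSet := DirectedSet {
  dcarrier :> Type;
  dle : dcarrier -> dcarrier -> Prop;
  dle_refl : forall s, dle s s;
  dle_trans : forall r s t, dle r s -> dle s t -> dle r t;
  dle_directed : forall s t, exists u, dle s u /\ dle t u;
  dinhabited : inhabited dcarrier
}.

Definition dgt (S : directedSet) (s t : S) : Prop := dle t s /\ ~ dle s t.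

(** The directed wedge of pointed spaces (Z_s, z_s), s in S.
    Carrier: [None] is the wedge point z0; [Some (s; x)] is a point
    x of Z_s different from z_s. *)
Section Wedge.
Variables (S : directedSet) (Z : S -> topologicalType) (z : forall s, Z s).

Definition wedge := option {s : S & {x : Z s | x <> z s}}.

HB.instance Definition _ := gen_eqMixin wedge.
HB.instance Definition _ := gen_choiceMixin wedge.

Definition wedge_incl (s : S) (x : Z s) : wedge :=
  match pselect (x = z s) with
  | left _ => None
  | right h => Some (existT _ s (exist _ x h))
  end.

Definition wedge_open (U : set wedge) : Prop :=
  (forall s, open (@wedge_incl s @^-1` U)) /\
  (U None -> exists t : S, forall s, dgt s t -> forall x : Z s, U (@wedge_incl s x)).

Lemma wedge_openT : wedge_open setT.
Proof. by split => [s|_]; [rewrite preimage_setT; exact: openT|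
  case: (dinhabited S) => t; exists t]. Qed.

Lemma wedge_openI : setI_closed wedge_open.
Proof.
move=> A B [oA cA] [oB cB]; split => [s|[/cA [t1 H1] /cB [t2 H2]]].
  by rewrite preimage_setI; apply: openI.
have [u [u1 u2]] := dle_directed t1 t2.
exists u => s [us nsu] x; split.
- apply: H1 => //; split; first exact: dle_trans u1 us.
  by move=> st1; apply: nsu; apply: dle_trans st1 u1.
- apply: H2 => //; split; first exact: dle_trans u2 us.
  by move=> st2; apply: nsu; apply: dle_trans st2 u2.
Qed.

Lemma wedge_open_bigU (I : Type) (f : I -> set wedge) :
  (forall i, wedge_open (f i)) -> wedge_open (\bigcup_i f i).
Proof.
move=> oF; split => [s|[i _ /(proj2 (oF i)) [t Ht]]].
  by rewrite preimage_bigcup; apply: bigcup_open => i _; exact: (proj1 (oF i)).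
by exists t => s st x; exists i => //; exact: Ht.
Qed.

HB.instance Definition _ :=
  isOpenTopological.Build wedge wedge_openT wedge_openI wedge_open_bigU.

End Wedge.

Definition unit_interval : set R := [set x | 0 <= x <= 1].
Definition unit_disk : set (R * R) := [set v | v.1 ^+ 2 + v.2 ^+ 2 <= 1].

Definition homeomorphism (X Y : topologicalType) (f : X -> Y) : Prop :=
  exists g : Y -> X,
    [/\ continuous f, continuous g, cancel f g & cancel g f].

Definition homeomorphic (X Y : topologicalType) : Prop :=
  exists f : X -> Y, homeomorphism f.

Definition pointed_homeomorphic_to_arc (X : topologicalType) (x : X) : Prop :=
  exists f : X -> set_type unit_interval,
    homeomorphism f /\ set_val (f x) = 0.

Definition unique_lifting (E B : topologicalType) (p : E -> B)
    (X : topologicalType) : Prop :=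
  forall (e0 : E) (x0 : X) (f : X -> B),
    continuous f -> f x0 = p e0 ->
    (exists g : X -> E, [/\ continuous g, (forall x, p (g x) = f x) & g x0 = e0])
    /\ (forall g1 g2 : X -> E, continuous g1 -> continuous g2 ->
          (forall x, p (g1 x) = f x) -> (forall x, p (g2 x) = f x) ->
          g1 x0 = e0 -> g2 x0 = e0 -> g1 = g2).

Definition disk_covering (E B : topologicalType) (p : E -> B) : Prop :=
  unique_lifting p (set_type unit_disk).

Definition arc_hedgehog_covering (E B : topologicalType) (p : E -> B) : Prop :=
  forall (S : directedSet) (Z : S -> topologicalType) (z : forall s, Z s),
    (forall s, pointed_homeomorphic_to_arc (z s)) ->
    unique_lifting p (wedge z).

Definition disk_hedgehog_covering (E B : topologicalType) (p : E -> B) : Prop :=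
  forall (S : directedSet) (Z : S -> topologicalType) (z : forall s, Z s),
    (forall s, homeomorphic (Z s) (set_type unit_disk)) ->
    unique_lifting p (wedge z).

From mathcomp Require Import all_boot all_order all_algebra.
From mathcomp Require Import all_classical all_reals topology_structure.
From mathcomp Require Import topology normedtype Rstruct Rstruct_topology.
From mathcomp Require Import lra.
From Stdlib Require Import Rdefinitions.

(** Lifting along a disk-hedgehog is done spike by spike: every spike is a
    disk, hence has unique lifts, and the spike lifts starting at one point
    over the wedge point glue to a lift on the wedge.  The only issue is
    continuity of the glued lift at the wedge point.  If it failed for a
    neighbourhood [A], pick on cofinally many spikes a point lifted outside
    [A] and join it to the base point by a segment.  This gives a map from an
    arc-hedgehog; by uniqueness of arc lifts its continuous lift agrees with
    the spike lifts along the segments, so it leaves [A] on cofinally many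
    arcs, which is absurd.  Conversely, a disk is a one-spike disk-hedgehog. *)

Set Implicit Arguments.
Unset Strict Implicit.
Unset Printing Implicit Defensive.
Import Order.TTheory GRing.Theory Num.Theory.
Local Open Scope classical_set_scope.
Local Open Scope ring_scope.

Notation I01 := (set_type unit_interval).
Notation D2 := (set_type unit_disk).

Section Lifting.
Variables (E B : topologicalType) (p : E -> B).

Lemma unique_lifting_eq (X : topologicalType) (f : X -> B) (g1 g2 : X -> E)
    (x0 : X) :
  unique_lifting p X -> continuous f -> continuous g1 -> continuous g2 ->
  (forall x, p (g1 x) = f x) -> (forall x, p (g2 x) = f x) ->
  g1 x0 = g2 x0 -> g1 = g2.
Proof.
move=> UL cf c1 c2 p1 p2 g12.
by apply: (UL (g1 x0) x0 f cf (esym (p1 x0))).2 => //; rewrite g12.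
Qed.

Lemma unique_lifting_homeomorphism (X Y : topologicalType) (h : X -> Y) :
  homeomorphism h -> unique_lifting p Y -> unique_lifting p X.
Proof.
case=> k [ch ck hk kh] UL e0 x0 f cf fx0.
have cfk : continuous (f \o k).
  by move=> y; exact: continuous_comp (ck y) (cf _).
have fk0 : (f \o k) (h x0) = p e0 by rewrite /= hk.
have [[g [cg pg g0]] _] := UL e0 (h x0) (f \o k) cfk fk0.
split.
  exists (g \o h); split => [x|x|//].
    exact: continuous_comp (ch x) (cg _).
  by rewrite /= pg /= hk.
move=> g1 g2 c1 c2 p1 p2 e1 e2.
have g12 : g1 \o k = g2 \o k.
  apply: (unique_lifting_eq (x0 := h x0) UL cfk).
  - by move=> y; exact: continuous_comp (ck y) (c1 _).
  - by move=> y; exact: continuous_comp (ck y) (c2 _).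
  - by move=> y; rewrite /= p1.
  - by move=> y; rewrite /= p2.
  - by rewrite /= hk e1 e2.
by apply: funext => x; rewrite -[x]hk; exact: (congr1 (fun F => F (h x)) g12).
Qed.

End Lifting.

Lemma homeomorphism_id (X : topologicalType) : homeomorphism (@id X).
Proof. by exists id; split => // x; exact: cvg_id. Qed.

Section WedgeMaps.
Variables (S : directedSet) (Z : S -> topologicalType) (z : forall s, Z s).
Local Notation incl s := (@wedge_incl S Z z s).

Lemma wedge_incl_continuous (s : S) : continuous (incl s).
Proof. by apply/continuousP => A [oA _]; exact: oA. Qed.

Lemma wedge_restrict_continuous (T : topologicalType) (h : wedge z -> T)
    (s : S) :
  continuous h -> continuous (h \o incl s).
Proof.
move=> ch x; apply: continuous_comp; last exact: ch.
exact: wedge_incl_continuous.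
Qed.

Lemma wedge_incl_base (s : S) : incl s (z s) = None.
Proof. by rewrite /wedge_incl; case: pselect. Qed.

Lemma wedge_inclE (s : S) (x : Z s) (h : x <> z s) :
  incl s x = Some (existT _ s (exist _ x h)).
Proof.
rewrite /wedge_incl; case: pselect => [//|h'].
by congr (Some (existT _ s _)); congr exist; exact: Prop_irrelevance.
Qed.

Lemma wedge_cases (w : wedge z) : w = None \/ exists s x, w = incl s x.
Proof.
case: w => [[s [x h]]|]; last by left.
by right; exists s, x; rewrite wedge_inclE.
Qed.

Lemma wedge_continuous_tail (T : topologicalType) (h : wedge z -> T)
    (A : set T) :
  continuous h -> open A -> A (h None) ->
  exists t, forall s, dgt s t -> forall x, A (h (incl s x)).
Proof. by move=> /continuousP ch /ch [_]; apply. Qed.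

Definition wedge_glue (T : Type) (e : T) (g : forall s, Z s -> T)
    (w : wedge z) : T :=
  match w with None => e | Some (existT s (exist x _)) => g s x end.

Lemma wedge_glue_incl (T : Type) (e : T) (g : forall s, Z s -> T) (s : S)
    (x : Z s) :
  g s (z s) = e -> wedge_glue e g (incl s x) = g s x.
Proof. by rewrite /wedge_incl; case: pselect => [->|]. Qed.

Lemma wedge_glue_continuous (T : topologicalType) (e : T)
    (g : forall s, Z s -> T) :
  (forall s, continuous (g s)) -> (forall s, g s (z s) = e) ->
  (forall A, open A -> A e ->
     exists t, forall s, dgt s t -> forall x, A (g s x)) ->
  continuous (wedge_glue e g).
Proof.
move=> cg g0 tail; apply/continuousP => A oA; split => [s|/(tail _ oA) [t Ht]].
  rewrite (_ : _ @^-1` _ = g s @^-1` A); first exact: open_comp.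
  by apply: funext => x; rewrite /preimage /= wedge_glue_incl.
by exists t => s st x; rewrite /preimage /= wedge_glue_incl //; exact: Ht.
Qed.

End WedgeMaps.

Arguments wedge_glue {S Z} z {T} e g w.

Section WedgeFunctor.
Variables (S : directedSet) (X Z : S -> topologicalType).
Variables (x : forall s, X s) (z : forall s, Z s).
Variables (phi : forall s, X s -> Z s).
Hypothesis phi_base : forall s : S, phi (x s) = z s.

Definition wedge_map : wedge x -> wedge z :=
  wedge_glue x (None : wedge z) (fun s => @wedge_incl S Z z s \o @phi s).

Lemma wedge_map_incl (s : S) (t : X s) :
  wedge_map (@wedge_incl S X x s t) = @wedge_incl S Z z s (phi t).
Proof. by rewrite /wedge_map wedge_glue_incl //= phi_base wedge_incl_base. Qed.

Lemma wedge_map_continuous :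
  (forall s, continuous (@phi s)) -> continuous wedge_map.
Proof.
move=> cphi; apply: wedge_glue_continuous => [s|s|V oV VN].
- move=> t; apply: continuous_comp; first exact: cphi.
  exact: wedge_incl_continuous.
- by rewrite /= phi_base wedge_incl_base.
- have [t Ht] := wedge_continuous_tail (h := id) (fun w => cvg_id) oV VN.
  by exists t => s st y; exact: Ht.
Qed.

End WedgeFunctor.

Arguments wedge_map {S X Z x z} phi.

Definition unit_directedSet : directedSet :=
  @DirectedSet unit (fun _ _ => True) (fun _ => I) (fun _ _ _ _ _ => I)
    (fun _ _ => ex_intro _ tt (conj I I)) (inhabits tt).

Lemma homeomorphism_unit_wedge_incl (X : topologicalType) (x0 : X) :
  homeomorphism (@wedge_incl unit_directedSet (fun _ => X) (fun _ => x0) tt).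
Proof.
exists (wedge_glue (fun _ => x0) x0 (fun _ => id)); split.
- exact: wedge_incl_continuous.
- apply: wedge_glue_continuous => [s y|//|A oA Ae]; first exact: cvg_id.
  by exists tt => s [_ ntt]; case: ntt.
- by move=> y; rewrite wedge_glue_incl.
- move=> w; case: (wedge_cases w) => [->|[[] [y ->]]].
    by rewrite /= wedge_incl_base.
  by rewrite wedge_glue_incl.
Qed.

Lemma unique_lifting_one_spike (E B X : topologicalType) (p : E -> B)
    (x0 : X) :
  unique_lifting p (@wedge unit_directedSet (fun _ => X) (fun _ => x0)) ->
  unique_lifting p X.
Proof.
exact/unique_lifting_homeomorphism/homeomorphism_unit_wedge_incl.
Qed.

Lemma unit_interval0 : (0 : R) \in unit_interval.
Proof. by apply/mem_set; rewrite /unit_interval /= lexx ler01. Qed.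

Lemma unit_interval1 : (1 : R) \in unit_interval.
Proof. by apply/mem_set; rewrite /unit_interval /= lexx ler01. Qed.

Definition zero01 : I01 := exist _ 0 unit_interval0.
Definition one01 : I01 := exist _ 1 unit_interval1.

Definition path_connected_from (X : topologicalType) (x : X) : Prop :=
  forall y, exists gamma : I01 -> X,
    [/\ continuous gamma, gamma zero01 = x & gamma one01 = y].

Lemma path_connected_from_homeomorphism (X Y : topologicalType) (h : X -> Y)
    (x : X) :
  homeomorphism h -> path_connected_from (h x) -> path_connected_from x.
Proof.
case=> k [_ ck hk kh] PC y; have [gamma [cg g0 g1]] := PC (h y).
exists (k \o gamma); split.
- by move=> t; apply: continuous_comp; [exact: cg|exact: ck].
- by rewrite /= g0 hk.
- by rewrite /= g1 hk.
Qed.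

Lemma unit_disk_convex (a b : R * R) (t : R) :
  a \in unit_disk -> b \in unit_disk -> 0 <= t <= 1 ->
  (a.1 + t * (b.1 - a.1), a.2 + t * (b.2 - a.2)) \in unit_disk.
Proof.
move=> /set_mem ha /set_mem hb /andP[t0 t1]; apply/mem_set.
move: ha hb; rewrite /unit_disk /= => ha hb.
have : 0 <= t * (1 - t) * ((a.1 - b.1) ^+ 2 + (a.2 - b.2) ^+ 2).
  by apply: mulr_ge0; [apply: mulr_ge0; lra|apply: addr_ge0; apply: sqr_ge0].
nra.
Qed.

Section DiskSegment.
Variables a b : D2.

Definition disk_segment (t : I01) : D2 :=
  exist (fun v => v \in unit_disk) _
    (unit_disk_convex (valP a) (valP b) (set_mem (valP t))).

Lemma disk_segment0 : disk_segment zero01 = a.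
Proof. by apply: val_inj; rewrite /= !mul0r !addr0; case: (val a). Qed.

Lemma disk_segment1 : disk_segment one01 = b.
Proof.
apply: val_inj; rewrite /= !mul1r !(addrC (val a).1) !(addrC (val a).2).
by rewrite !subrK; case: (val b).
Qed.

Lemma disk_segment_continuous : continuous disk_segment.
Proof.
apply: (@continuous_comp_initial _ I01 _ (@set_val _ unit_disk)) => t.
have cval : continuous (@set_val _ unit_interval) by exact: initial_continuous.
have affine (c d : R) : {for t, continuous (fun u : I01 => d + val u * c)}.
  apply: (@continuous_comp _ _ _ set_val (fun x : R => d + x * c) _ (cval t)).
  apply: (@cvgD _ R^o _ _ _ (fun _ => d) (fun u : R^o => u * c : R^o)).
    exact: cvg_cst.
  by apply: (@cvgM _ _ _ _ (fun u : R^o => u) (fun _ => c));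
    [exact: cvg_id|exact: cvg_cst].
exact: cvg_pair (affine _ _) (affine _ _).
Qed.

End DiskSegment.

Lemma unit_disk_path_connected (a : D2) : path_connected_from a.
Proof.
move=> b; exists (disk_segment a b); split.
- exact: disk_segment_continuous.
- exact: disk_segment0.
- exact: disk_segment1.
Qed.

Section HedgehogLifting.
Local Unset Implicit Arguments.
Variables (E B : topologicalType) (p : E -> B).
Variables (S : directedSet) (Z : S -> topologicalType) (z : forall s, Z s).
Local Notation incl s := (@wedge_incl S Z z s).
Local Notation arc_hedgehog := (@wedge S (fun _ => I01) (fun _ => zero01)).
Local Notation arc_incl s := (@wedge_incl S (fun _ => I01) (fun _ => zero01) s).

Hypothesis lift_arc : unique_lifting p I01.
Hypothesis lift_arc_hedgehog : unique_lifting p arc_hedgehog.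
Hypothesis lift_spike : forall s, unique_lifting p (Z s).
Hypothesis spike_path_connected : forall s, path_connected_from (z s).

Section FixedMap.
Variables (f : wedge z -> B) (cf : continuous f).

Lemma wedge_lift_spike_eq (g1 g2 : wedge z -> E) (s : S) (x : Z s) :
  continuous g1 -> continuous g2 ->
  (forall w, p (g1 w) = f w) -> (forall w, p (g2 w) = f w) ->
  g1 (incl s x) = g2 (incl s x) ->
  forall y, g1 (incl s y) = g2 (incl s y).
Proof.
move=> c1 c2 p1 p2 e12 y.
suff /(congr1 (fun F => F y)) : g1 \o incl s = g2 \o incl s by [].
apply: (unique_lifting_eq (x0 := x) (lift_spike s)
  (wedge_restrict_continuous (s := s) cf)) => //.
- exact: wedge_restrict_continuous.
- exact: wedge_restrict_continuous.
- by move=> u; exact: p1.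
- by move=> u; exact: p2.
Qed.

Lemma wedge_lift_unique (g1 g2 : wedge z -> E) (w : wedge z) :
  continuous g1 -> continuous g2 ->
  (forall w, p (g1 w) = f w) -> (forall w, p (g2 w) = f w) ->
  g1 w = g2 w -> g1 = g2.
Proof.
move=> c1 c2 p1 p2 e12.
have spike_eq := wedge_lift_spike_eq g1 g2 _ _ c1 c2 p1 p2.
have eN : g1 None = g2 None.
  case: (wedge_cases w) e12 => [->//|[s [x ->]] /spike_eq /(_ (z s))].
  by rewrite wedge_incl_base.
apply: funext => w'; case: (wedge_cases w') => [->//|[s [x ->]]].
by apply: (spike_eq s (z s)); rewrite wedge_incl_base.
Qed.

Section SpikeLifts.
Variables (es : E) (ls : forall s, Z s -> E).
Hypothesis es_lift : f None = p es.
Hypothesis ls_continuous : forall s, continuous (ls s).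
Hypothesis ls_lift : forall s x, p (ls s x) = f (incl s x).
Hypothesis ls_base : forall s, ls s (z s) = es.

Lemma arc_hedgehog_lift_incl (gamma : forall s, I01 -> Z s)
    (gamma0 : forall s, gamma s zero01 = z s) (h : arc_hedgehog -> E) :
  (forall s, continuous (gamma s)) ->
  continuous h -> (forall w, p (h w) = f (wedge_map gamma w)) ->
  h None = es ->
  forall s t, h (arc_incl s t) = ls s (gamma s t).
Proof.
move=> cgamma ch ph h0 s t.
suff /(congr1 (fun F => F t)) : h \o arc_incl s = ls s \o gamma s by [].
have cfg : continuous (f \o incl s \o gamma s).
  move=> u; apply: continuous_comp; first exact: cgamma.
  exact: wedge_restrict_continuous.
apply: (unique_lifting_eq (x0 := zero01) lift_arc cfg).
- exact: wedge_restrict_continuous.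
- by move=> u; apply: continuous_comp; [exact: cgamma|exact: ls_continuous].
- by move=> u; rewrite /= ph wedge_map_incl.
- by move=> u; exact: ls_lift.
- by rewrite /= wedge_incl_base h0 gamma0 ls_base.
Qed.

Lemma spike_lifts_tail (A : set E) :
  open A -> A es -> exists t, forall s, dgt s t -> forall x, A (ls s x).
Proof.
move=> oA Aes.
have escape s : {y : Z s | (exists x, ~ A (ls s x)) -> ~ A (ls s y)}.
  apply: cid; case: (pselect (exists x, ~ A (ls s x))) => [[x nx]|nex].
  - by exists x.
  - by exists (z s).
pose gamma s := projT1 (cid (spike_path_connected s (projT1 (escape s)))).
have gammaP s := projT2 (cid (spike_path_connected s (projT1 (escape s)))).
have cgamma s : continuous (gamma s) by have [] := gammaP s.
have gamma0 s : gamma s zero01 = z s by have [] := gammaP s.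
have gamma1 s : gamma s one01 = projT1 (escape s) by have [] := gammaP s.
have cfPhi : continuous (f \o (wedge_map gamma : arc_hedgehog -> _)).
  move=> w; apply: continuous_comp; [exact: wedge_map_continuous|exact: cf].
have [[h [ch ph h0]] _] := lift_arc_hedgehog es None _ cfPhi es_lift.
have [t Ht] := wedge_continuous_tail ch oA (eq_ind_r A Aes h0).
exists t => s st x; apply: contrapT => nx.
have := Ht s st one01; rewrite (arc_hedgehog_lift_incl gamma gamma0) //.
by rewrite gamma1; apply: (projT2 (escape s)); exists x.
Qed.

Lemma wedge_glue_lift :
  continuous (wedge_glue z es ls) /\ forall w, p (wedge_glue z es ls w) = f w.
Proof.
split.
  by apply: wedge_glue_continuous => // A oA Aes; exact: spike_lifts_tail.
move=> w; case: (wedge_cases w) => [->//|[s [x ->]]].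
by rewrite wedge_glue_incl.
Qed.

End SpikeLifts.

Lemma wedge_lift_at_base (es : E) : f None = p es ->
  exists g, [/\ continuous g, forall w, p (g w) = f w & g None = es].
Proof.
move=> es_lift.
have spike_lift s := (lift_spike s es (z s) _
  (wedge_restrict_continuous (s := s) cf)
  (etrans (congr1 f (wedge_incl_base z s)) es_lift)).1.
pose ls s := projT1 (cid (spike_lift s)).
have lsP s := projT2 (cid (spike_lift s)).
have cls s : continuous (ls s) by have [] := lsP s.
have pls s x : p (ls s x) = f (incl s x) by have [_ ->] := lsP s.
have ls0 s : ls s (z s) = es by have [] := lsP s.
have [cg pg] := wedge_glue_lift es ls es_lift cls pls ls0.
by exists (wedge_glue z es ls).
Qed.

End FixedMap.

Lemma wedge_unique_lifting : unique_lifting p (wedge z).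
Proof.
move=> e0 w0 f cf fw0; split; last first.
  move=> g1 g2 c1 c2 p1 p2 e1 e2.
  by apply: (wedge_lift_unique f cf g1 g2 w0) => //; rewrite e1 e2.
case: (wedge_cases w0) fw0 => [->|[s [x ->]]] fw0.
  exact: wedge_lift_at_base.
have cfs := wedge_restrict_continuous (s := s) cf.
have [[l [cl pl l0]] _] := lift_spike s e0 x _ cfs fw0.
have fN : f None = p (l (z s)) by rewrite pl /= wedge_incl_base.
have [g [cg pg g0]] := wedge_lift_at_base f cf (l (z s)) fN.
exists g; split => //.
rewrite -l0; suff <- : g \o incl s = l by [].
apply: (unique_lifting_eq (x0 := z s) (lift_spike s) cfs) => //.
- exact: wedge_restrict_continuous.
- by move=> u; exact: pg.
- by rewrite /= wedge_incl_base.
Qed.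

End HedgehogLifting.

Lemma unit_disk0 : ((0 : R), (0 : R)) \in unit_disk.
Proof. by apply/mem_set; rewrite /unit_disk /= expr0n /= addr0 ler01. Qed.

Definition zero_disk : D2 := exist _ (0, 0) unit_disk0.

Theorem proposition3p15 (E B : topologicalType) (p : E -> B) :
  continuous p ->
  arc_hedgehog_covering p ->
  (disk_hedgehog_covering p <-> disk_covering p).
Proof.
move=> _ AH.
have arc0 : pointed_homeomorphic_to_arc zero01.
  by exists id; split; [exact: homeomorphism_id|].
have disk_self : homeomorphic D2 D2 by exists id; exact: homeomorphism_id.
have lift_arc : unique_lifting p I01.
  exact: unique_lifting_one_spike (AH unit_directedSet _ _ (fun _ => arc0)).
split => [DH | DC].
  exact: unique_lifting_one_spike
    (DH unit_directedSet _ (fun _ => zero_disk) (fun _ => disk_self)).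
move=> S Z z HZ; apply: wedge_unique_lifting => // [|s|s].
- exact: AH.
- by have [k hk] := HZ s; exact: unique_lifting_homeomorphism hk DC.
- have [k hk] := HZ s.
  exact: path_connected_from_homeomorphism hk (unit_disk_path_connected _).
Qed.
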